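(* Let $\mathbb{F}$ be a field and let $(\mathbb{F}(\alpha,\beta),\sigma)$ be a bivariate difference field extension of $\mathbb{F}$ with $\sigma|_{\mathbb{F}}=\mathrm{id}$, $\sigma(\alpha)=\beta$, $\sigma(\beta)=u\alpha+v\beta$ ($u\in\mathbb{F}\setminus\{0\}$, $v\in\mathbb{F}$). Let $A=\begin{pmatrix}0&u\\1&v\end{pmatrix}$ and assume that $A$ has two distinct eigenvalues $\lambda_1\neq\lambda_2$ in $\mathbb{F}$ such that $\lambda_1/\lambda_2$ is not a root of unity. Let $p,q\in\mathbb{F}[\alpha,\beta]$ be nonzero homogeneous polynomials such that $g=\frac{p}{q}$ is semi-invariant. Then there exists an integer $i$ with $-\deg q\le i\le \deg p$ such that $$\frac{\sigma g}{g}=\lambda_1^{\,i}\,\lambda_2^{\,\deg p-\deg q-i}.$$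
   Context: A bivariate difference field extension $(\mathbb{F}(\alpha,\beta),\sigma)$ of a difference field $(\mathbb{F},\sigma)$ is the rational function field $\mathbb{F}(\alpha,\beta)$ in two algebraically independent transcendental elements $\alpha,\beta$ over $\mathbb{F}$, together with an automorphism $\sigma$ of $\mathbb{F}(\alpha,\beta)$ extending $\sigma$ on $\mathbb{F}$ and satisfying $\sigma(\alpha)=\beta$, $\sigma(\beta)=u\alpha+v\beta$ with $v\in\mathbb{F}$, $u\in\mathbb{F}\setminus\{0\}$. $\deg$ denotes total degree in $\alpha,\beta$; a polynomial is homogeneous if all its monomials have the same total degree. An element $a\in\mathbb{F}(\alpha,\beta)$ is called semi-invariant if $\sigma a=ca$ for some $c\in\mathbb{F}\setminus\{0\}$. *)

From HB Require Import structures.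
From mathcomp Require Import all_boot all_order all_algebra.
From mathcomp Require Import fraction.
From mathcomp.multinomials Require Import mpoly.
Set Implicit Arguments. Unset Strict Implicit. Unset Printing Implicit Defensive.
Import Order.TTheory GRing.Theory Num.Theory.
Local Open Scope ring_scope.

Definition alpha (F : fieldType) : {mpoly F[2]} := 'X_(0 : 'I_2).
Definition beta (F : fieldType) : {mpoly F[2]} := 'X_(1 : 'I_2).

Definition sigmaP (F : fieldType) (u v : F) (p : {mpoly F[2]}) : {mpoly F[2]} :=
  p \mPo [tuple beta F; u *: alpha F + v *: beta F].

Definition ratfun (F : fieldType) := {fraction {mpoly F[2]}}.

Definition ratf (F : fieldType) (p q : {mpoly F[2]}) : ratfun F :=
  FracField.tofrac p / FracField.tofrac q.

(* sigma (p/q) = sigma(p)/sigma(q), the unique extension of sigma to the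
   fraction field. *)
Definition sigma_ratf (F : fieldType) (u v : F) (p q : {mpoly F[2]}) : ratfun F :=
  ratf (sigmaP u v p) (sigmaP u v q).

Definition constf (F : fieldType) (c : F) : ratfun F := FracField.tofrac (c%:MP).

Definition tdeg (F : fieldType) (p : {mpoly F[2]}) : nat := (msize p).-1.

Definition Amat (F : fieldType) (u v : F) : 'M[F]_2 :=
  \matrix_(i < 2, j < 2)
    (if (i : nat) == 0%N then (if (j : nat) == 0%N then 0 else u)
     else (if (j : nat) == 0%N then 1 else v)).

Definition is_root_of_unity (F : fieldType) (a : F) : Prop :=
  exists2 n : nat, (0 < n)%N & a ^+ n = 1.

From mathcomp Require Import all_boot all_order all_algebra.
From mathcomp Require Import fraction.
From mathcomp.multinomials Require Import mpoly.
From mathcomp Require Import ring zify.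
Set Implicit Arguments. Unset Strict Implicit. Unset Printing Implicit Defensive.
Import Order.TTheory GRing.Theory.
Local Open Scope ring_scope.

(* In the eigen-coordinates x, y given by alpha = x + y and
   beta = lambda1 x + lambda2 y, sigma acts diagonally, x |-> lambda1 x and
   y |-> lambda2 y.  It therefore multiplies the coefficient of x^a y^b by
   lambda1^a lambda2^b and preserves leading monomials.  Comparing leading
   coefficients in sigma(p) q = c p sigma(q) gives
   lambda1^a lambda2^b = c lambda1^a' lambda2^b', where x^a y^b and x^a' y^b'
   are the leading monomials of p and q written in x, y; homogeneity gives a + b = deg p and a' + b' = deg q, and
   i = a - a'. *)

Lemma big_ord2 (R : Type) (idx : R) (op : Monoid.law idx) (F : 'I_2 -> R) :
  \big[op/idx]_(i < 2) F i = op (F 0) (F 1).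
Proof. by rewrite big_ord_recr big_ord1; congr (op (F _) (F _)); apply: val_inj. Qed.

Lemma eq_from_tnth2 (T : Type) (t1 t2 : 2.-tuple T) :
  tnth t1 0 = tnth t2 0 -> tnth t1 1 = tnth t2 1 -> t1 = t2.
Proof.
move=> e0 e1; apply: eq_from_tnth => -[[|[|//]] i2].
  by rewrite (_ : Ordinal i2 = 0) //; apply: val_inj.
by rewrite (_ : Ordinal i2 = 1) //; apply: val_inj.
Qed.

Lemma comp_mpolyA (R : comNzRingType) n k l (p : {mpoly R[n]})
  (lq : n.-tuple {mpoly R[k]}) (lr : k.-tuple {mpoly R[l]}) :
  (p \mPo lq) \mPo lr = p \mPo [tuple tnth lq i \mPo lr | i < n].
Proof.
rewrite [RHS]comp_mpolyEX (comp_mpolyEX p lq) raddf_sum; apply: eq_bigr => m _.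
rewrite /= comp_mpolyZ !comp_mpolyX rmorph_prod; congr (_ *: _).
by apply: eq_bigr => i _; rewrite rmorphXn tnth_mktuple.
Qed.

Lemma comp_mpoly_dhomog (R : comNzRingType) n k (p : {mpoly R[n]})
  (lq : n.-tuple {mpoly R[k]}) d :
  (forall i, tnth lq i \is 1.-homog) -> p \is d.-homog -> p \mPo lq \is d.-homog.
Proof.
move=> lq1 hp; rewrite comp_mpolyE big_seq; apply: rpred_sum => m hm; apply: rpredZ.
have -> : d = (\sum_i m i)%N by rewrite -(dhomog_mf hp hm); exact: mdegE.
apply: (big_ind2 (fun (P : {mpoly R[k]}) e => P \is e.-homog)) => //.
- exact: dhomog1.
- by move=> ? ? ? ? ? ?; apply: dhomogM.
by move=> i _; rewrite -[X in X.-homog]mul1n; apply: dhomogMn.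
Qed.

Lemma mdeg2 (m : 'X_{1..2}) : mdeg m = (m 0%R + m 1%R)%N.
Proof. by rewrite mdegE big_ord2. Qed.

Section DiagonalSubstitution.
Variables (R : idomainType) (n : nat) (w : 'I_n -> R).

Definition mdiag : n.-tuple {mpoly R[n]} := [tuple w i *: 'X_i | i < n].

Definition mweight (m : 'X_{1..n}) : R := \prod_(i < n) w i ^+ m i.

Lemma comp_mdiagXU i : 'X_i \mPo mdiag = w i *: 'X_i.
Proof. by rewrite comp_mpolyXU -tnth_nth tnth_mktuple. Qed.

Lemma comp_mdiagX m : 'X_[m] \mPo mdiag = mweight m *: 'X_[m].
Proof.
rewrite comp_mpolyX mpolyXE_id -scaler_prod; apply: eq_bigr => i _.
by rewrite tnth_mktuple exprZn.
Qed.

Lemma mcoeff_comp_mdiag P m : (P \mPo mdiag)@_m = mweight m * P@_m.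
Proof.
rewrite comp_mpolyEX {3}(mpolyE P) !raddf_sum /= mulr_sumr; apply: eq_bigr => m' _.
rewrite comp_mdiagX !mcoeffZ mcoeffX.
by case: eqP => [->|_]; rewrite ?mulr0 // !mulr1 mulrC.
Qed.

Hypothesis w_neq0 : forall i, w i != 0.

Lemma mweight_neq0 m : mweight m != 0.
Proof. by apply/prodf_neq0 => i _; rewrite expf_neq0. Qed.

Lemma mcoeff_comp_mdiag_eq0 P m : ((P \mPo mdiag)@_m == 0) = (P@_m == 0).
Proof. by rewrite mcoeff_comp_mdiag mulf_eq0 (negbTE (mweight_neq0 m)). Qed.

Lemma comp_mdiag_eq0 P : (P \mPo mdiag == 0) = (P == 0).
Proof.
apply/eqP/eqP => [DP0|->]; last exact: comp_mpoly0.
by apply/mpolyP => m; apply/eqP; rewrite mcoeff0 -mcoeff_comp_mdiag_eq0 DP0 mcoeff0.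
Qed.

Lemma mlead_comp_mdiag P : mlead (P \mPo mdiag) = mlead P.
Proof.
have [->|P0] := eqVneq P 0; first by rewrite comp_mpoly0.
apply: le_anti; rewrite !msupp_le_mlead // mcoeff_msupp.
  by rewrite mcoeff_comp_mdiag_eq0 mleadc_eq0.
by rewrite -mcoeff_comp_mdiag_eq0 mleadc_eq0 comp_mdiag_eq0.
Qed.

Lemma mleadc_comp_mdiag P : mleadc (P \mPo mdiag) = mweight (mlead P) * mleadc P.
Proof. by rewrite mlead_comp_mdiag mcoeff_comp_mdiag. Qed.

Lemma mweight_mlead_semi_invariant P Q c : P != 0 -> Q != 0 ->
  (P \mPo mdiag) * Q = c%:MP * (P * (Q \mPo mdiag)) ->
  mweight (mlead P) = c * mweight (mlead Q).
Proof.
move=> P0 Q0 /(congr1 (fun r => mleadc r)).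
rewrite mul_mpolyC mleadcZE !mleadcM_proper ?mulf_neq0 ?mleadc_eq0 ?comp_mdiag_eq0 //.
rewrite !mleadc_comp_mdiag => E.
have lc0 : mleadc P * mleadc Q != 0 by rewrite mulf_neq0 ?mleadc_eq0.
by apply: (mulIf lc0); rewrite mulrA E; ring.
Qed.

End DiagonalSubstitution.

Lemma mweight2 (R : idomainType) (a b : R) (m : 'X_{1..2}) :
  mweight (tnth [tuple a; b]) m = a ^+ m 0 * b ^+ m 1.
Proof. by rewrite /mweight big_ord2. Qed.

Lemma eigenvalue_Amat (F : fieldType) (u v l : F) :
  eigenvalue (Amat u v) l -> l ^+ 2 = u + v * l.
Proof.
case/eigenvalueP => w wA w_neq0.
have wAE j : (w *m Amat u v) 0 j = l * w 0 j by rewrite wA mxE.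
move: (wAE 0) (wAE 1); rewrite !mxE !big_ord2 !mxE /= mulr0 add0r mulr1.
move=> e0 e1.
have w00 : w 0 0 != 0.
  apply: contra_neq w_neq0 => w00; apply/rowP => -[[|[|//]] j2]; rewrite !mxE.
    by rewrite (_ : Ordinal j2 = 0) //; apply: val_inj.
  by rewrite (_ : Ordinal j2 = 1) ?e0 ?w00 ?mulr0 //; apply: val_inj.
by apply: (mulIf w00); rewrite expr2 -mulrA -e0 -e1 e0; ring.
Qed.

Lemma eigenvalue_Amat_neq0 (F : fieldType) (u v l : F) :
  u != 0 -> eigenvalue (Amat u v) l -> l != 0.
Proof.
move=> u0 /eigenvalue_Amat l_root; apply: contra_neq u0 => l0.
by move: l_root; rewrite l0 expr0n mulr0 addr0.
Qed.

Section EigenCoordinates.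
Variables (F : fieldType) (l1 l2 : F).
Hypothesis l12 : l1 != l2.

Local Notation x := ('X_0 : {mpoly F[2]}).
Local Notation y := ('X_1 : {mpoly F[2]}).

Definition eigen_subst : 2.-tuple {mpoly F[2]} := [tuple x + y; l1 *: x + l2 *: y].

Definition eigen_subst_inv : 2.-tuple {mpoly F[2]} :=
  [tuple (l2 - l1)^-1 *: (l2 *: x - y); (l2 - l1)^-1 *: (y - l1 *: x)].

Lemma comp_eigen_substK : cancel (comp_mpoly eigen_subst) (comp_mpoly eigen_subst_inv).
Proof.
move=> p; rewrite comp_mpolyA -[RHS]comp_mpoly_id; congr (_ \mPo _).
have kE : ((l2 - l1)^-1)%:MP * (l2%:MP - l1%:MP) = 1 :> {mpoly F[2]}.
  by rewrite -rmorphB -rmorphM mulVf // subr_eq0 eq_sym.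
apply: eq_from_tnth2; rewrite !tnth_mktuple /= !comp_mpolyD ?comp_mpolyZ.
all: by rewrite !comp_mpolyXU /= -[RHS]mul1r -kE -!mul_mpolyC; ring.
Qed.

Lemma comp_eigen_subst_eq0 p : (p \mPo eigen_subst == 0) = (p == 0).
Proof. exact/raddf_eq0/can_inj/comp_eigen_substK. Qed.

Lemma comp_eigen_subst_dhomog d p : p \is d.-homog -> p \mPo eigen_subst \is d.-homog.
Proof.
have X1 i : ('X_i : {mpoly F[2]}) \is 1.-homog by rewrite dhomogX /= mdeg1.
by apply: comp_mpoly_dhomog => -[[|[|//]] i2]; rewrite (tnth_nth 0) /= rpredD ?rpredZ ?X1.
Qed.

Lemma mdeg_mlead_comp_eigen_subst p :
  p != 0 -> p \is homog mdeg -> mdeg (mlead (p \mPo eigen_subst)) = tdeg p.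
Proof.
rewrite homog_msize => p0 /comp_eigen_subst_dhomog homT.
by apply: (dhomog_mf homT); rewrite mlead_supp // comp_eigen_subst_eq0.
Qed.

Variables u v : F.
Hypotheses (l1_root : l1 ^+ 2 = u + v * l1) (l2_root : l2 ^+ 2 = u + v * l2).
Hypotheses (l1_neq0 : l1 != 0) (l2_neq0 : l2 != 0).

Local Notation w := (tnth [tuple l1; l2]).

Lemma eigen_weight_neq0 i : w i != 0.
Proof. by case: i => -[|[|//]] i2; rewrite (tnth_nth 0). Qed.

Lemma sigmaP_comp_eigen_subst p :
  sigmaP u v p \mPo eigen_subst = (p \mPo eigen_subst) \mPo mdiag w.
Proof.
rewrite /sigmaP !comp_mpolyA; apply: (congr1 (fun t => p \mPo t)).
apply: eq_from_tnth2; rewrite !tnth_mktuple !(tnth_nth 0) /=.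
all: rewrite !comp_mpolyD ?comp_mpolyZ !comp_mdiagXU !comp_mpolyXU //=.
rewrite !scalerA -!expr2 l1_root l2_root -!mul_mpolyC !rmorphD !rmorphM /=; ring.
Qed.

Lemma sigmaP_eq0 p : (sigmaP u v p == 0) = (p == 0).
Proof.
rewrite -comp_eigen_subst_eq0 sigmaP_comp_eigen_subst comp_mdiag_eq0.
  exact: comp_eigen_subst_eq0.
exact: eigen_weight_neq0.
Qed.

Lemma mweight_eigen_semi_invariant p q c : p != 0 -> q != 0 ->
  sigmaP u v p * q = c%:MP * (p * sigmaP u v q) ->
  mweight w (mlead (p \mPo eigen_subst)) = c * mweight w (mlead (q \mPo eigen_subst)).
Proof.
move=> p0 q0 /(congr1 (comp_mpoly eigen_subst)).
rewrite !rmorphM /= comp_mpolyC !sigmaP_comp_eigen_subst.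
apply: mweight_mlead_semi_invariant; rewrite ?comp_eigen_subst_eq0 //.
exact: eigen_weight_neq0.
Qed.

End EigenCoordinates.

Lemma constf_mul_ratf (F : fieldType) (c : F) (p q : {mpoly F[2]}) :
  constf c * ratf p q = ratf (c%:MP * p) q.
Proof. by rewrite /constf /ratf tofracM mulrA. Qed.

Lemma ratf_eq (F : fieldType) (p q r s : {mpoly F[2]}) : q != 0 -> s != 0 ->
  (ratf p q == ratf r s) = (p * s == r * q).
Proof.
move=> q0 s0; rewrite /ratf eqr_div ?tofrac_eq0 //.
by rewrite -!tofracM tofrac_eq.
Qed.

Lemma ratf_neq0 (F : fieldType) (p q : {mpoly F[2]}) : p != 0 -> q != 0 -> ratf p q != 0.
Proof. by move=> p0 q0; rewrite mulf_neq0 ?invr_eq0 ?tofrac_eq0. Qed.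

Lemma monomial_ratio_exponent (F : fieldType) (l1 l2 c : F) (a b a' b' : nat) :
  l1 != 0 -> l2 != 0 -> l1 ^+ a * l2 ^+ b = c * (l1 ^+ a' * l2 ^+ b') ->
  exists i : int, [/\ - (a' + b')%:Z <= i, i <= (a + b)%:Z &
    c = l1 ^ i * l2 ^ ((a + b)%:Z - (a' + b')%:Z - i)].
Proof.
move=> l1_0 l2_0 E; exists (a%:Z - a'%:Z); split; [lia | lia |].
have -> : (a + b)%:Z - (a' + b')%:Z - (a%:Z - a'%:Z) = b%:Z - b'%:Z by lia.
have m0 : l1 ^+ a' * l2 ^+ b' != 0 by rewrite mulf_neq0 ?expf_neq0.
rewrite !expfzDr // -!exprnN /= -(mulfK m0 c) -E invfM.
rewrite -[l1 ^ a]/(l1 ^+ a) -[l2 ^ b]/(l2 ^+ b); ring.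
Qed.

Theorem theorem2p2 (F : fieldType) (u v : F) (lambda1 lambda2 : F)
  (p q : {mpoly F[2]}) :
  u != 0 ->
  eigenvalue (Amat u v) lambda1 -> eigenvalue (Amat u v) lambda2 ->
  lambda1 != lambda2 ->
  ~ is_root_of_unity (lambda1 / lambda2) ->
  p != 0 -> q != 0 ->
  p \is homog mdeg -> q \is homog mdeg ->
  (exists2 c : F, c != 0 & sigma_ratf u v p q = constf c * ratf p q) ->
  exists i : int,
    [/\ - (tdeg q)%:Z <= i, i <= (tdeg p)%:Z &
        sigma_ratf u v p q / ratf p q
        = constf (lambda1 ^ i * lambda2 ^ ((tdeg p)%:Z - (tdeg q)%:Z - i))].
Proof.
move=> u0 e1 e2 l12 _ p0 q0 hp hq [c _ hs].
have [l1_0 l2_0] := (eigenvalue_Amat_neq0 u0 e1, eigenvalue_Amat_neq0 u0 e2).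
have [l1_root l2_root] := (eigenvalue_Amat e1, eigenvalue_Amat e2).
have E : sigmaP u v p * q = c%:MP * (p * sigmaP u v q).
  apply/eqP; rewrite mulrA -ratf_eq ?(sigmaP_eq0 l12 l1_root l2_root) //.
  by rewrite -constf_mul_ratf -hs.
have := mweight_eigen_semi_invariant l12 l1_root l2_root l1_0 l2_0 p0 q0 E.
have := mdeg_mlead_comp_eigen_subst l12 p0 hp.
have := mdeg_mlead_comp_eigen_subst l12 q0 hq.
rewrite !mdeg2 !mweight2 => <- <- /(monomial_ratio_exponent l1_0 l2_0) [i [lb ub cE]].
by exists i; rewrite hs mulfK ?ratf_neq0 // cE.
Qed.
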